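(* Let $s_2=s_2(z)$ be the formal power series \[ s_2=\frac{1+z-z^{2}-\sqrt{1-2z-z^{2}-2z^{3}+z^{4}}}{2z}, \] where the square root is the power series with constant term $1$ (so $s_2=1+z^2+z^3+2z^4+\cdots$). For $k\ge 0$ let $f_k(z)$ and $g_k(z)$ be the generating functions (in the variable $z$ marking the number of steps) of partial Dyck paths with air pockets ending at level $k$ whose last step is an up-step or that are empty (for $f_k$), respectively whose last step is a down-step (for $g_k$). Then for all $k\ge 0$, \[ f_k=z^{k}s_2^{k},\qquad g_k=z^k\bigl(s_2^{k+1}-s_2^{k}\bigr). \] In particular, $f_k+g_k=z^ks_2^{k+1}$ is the generating function of partial Dyck paths with air pockets ending at level $k$.
   Context: A partial Dyck path with air pockets is a lattice path starting at $(0,0)$, using up-steps $(1,1)$ and down-steps $(1,-j)$ for any integer $j\ge1$, never going below the $x$-axis, such that no two down-steps are consecutive; it may end at any level $k\ge0$ (the height of its endpoint). Equivalently, $f_k,g_k$ are the unique formal power series in $z$ satisfying $f_0=1$, $f_k=zf_{k-1}+zg_{k-1}$ for $k\ge1$, and $g_k=z\sum_{j>k}f_j$ for $k\ge0$. *)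

From mathcomp Require Import all_boot all_order all_algebra.
Set Implicit Arguments. Unset Strict Implicit. Unset Printing Implicit Defensive.
Import Order.TTheory GRing.Theory Num.Theory.
Local Open Scope ring_scope.

Definition ps := nat -> rat.

Definition ps_of_poly (p : {poly rat}) : ps := fun n => p`_n.
Definition ps_one : ps := fun n => (n == 0%N)%:R.
Definition ps_add (a b : ps) : ps := fun n => a n + b n.
Definition ps_sub (a b : ps) : ps := fun n => a n - b n.
Definition ps_scale (c : rat) (a : ps) : ps := fun n => c * a n.
Definition ps_mul (a b : ps) : ps := fun n => \sum_(i < n.+1) a i * b (n - i)%N.
Definition ps_exp (a : ps) (k : nat) : ps := iter k (ps_mul a) ps_one.
Definition ps_zpow (k : nat) : ps := fun n => (n == k)%:R.
(* division by z of a series with zero constant term: a / z *)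
Definition ps_divz (a : ps) : ps := fun n => a n.+1.

Definition Delta : {poly rat} := 1 - 2%:R *: 'X - 'X^2 - 2%:R *: 'X^3 + 'X^4.
Definition numer_poly : {poly rat} := 1 + 'X - 'X^2.

(** s_2 = (1 + z - z^2 - r) / (2z), where r is the formal square root of Delta
    with constant term 1 *)
Definition s2_of (r : ps) : ps :=
  ps_scale (1 / 2%:R) (ps_divz (ps_sub (ps_of_poly numer_poly) r)).

(** * Partial Dyck paths with air pockets
    A path is a sequence of steps s : seq int; an up-step (1,1) is the step 1,
    a down-step (1,-j), j >= 1, is the step -j. *)
Definition is_up (x : int) : bool := x == 1.
Definition is_down (x : int) : bool := x <= -1.

Definition height (s : seq int) (i : nat) : int := \sum_(0 <= j < i) s`_j.

Definition air_path (s : seq int) : bool :=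
  [&& all (fun x => is_up x || is_down x) s,
      all (fun i => 0 <= height s i) (iota 0 (size s).+1) &
      all (fun i => ~~ (is_down s`_i && is_down s`_i.+1)) (iota 0 (size s).-1)].

Definition end_level (s : seq int) : int := height s (size s).

(* Every down-step of a path of length n has size at most n - 1, so the
   n-tuples over 'I_n.+1 encode (injectively) all candidate paths of length n. *)
Definition dec_step (i : nat) : int := if i == 0%N then 1 else - (i%:Z).
Definition dec_path n (t : n.-tuple 'I_n.+1) : seq int := [seq dec_step (nat_of_ord i) | i <- tval t].

Definition count_paths (P : seq int -> bool) (n : nat) : nat :=
  #|[set t : n.-tuple 'I_n.+1 | air_path (dec_path t) && P (dec_path t)]|.

Definition f_gf (k : nat) : ps := fun n =>
  (count_paths (fun s => (end_level s == k%:Z) &&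
                         ((s == [::]) || is_up (last 0 s))) n)%:R.
Definition g_gf (k : nat) : ps := fun n =>
  (count_paths (fun s => (end_level s == k%:Z) &&
                         (s != [::]) && is_down (last 0 s)) n)%:R.
Definition all_gf (k : nat) : ps := fun n =>
  (count_paths (fun s => end_level s == k%:Z) n)%:R.

(* Both sides obey one recursion, which determines them.  Removing the last
   step of a path gives f_{k+1} = z (f_k + g_k); a path counted by g_k is a
   path ending at a level j > k with an up-step (or empty), followed by one
   down-step, and splitting off the case j = k + 1 gives g_k = z f_{k+1} + g_{k+1}.
   Together with f_0 = 1, f_{k+1}(0) = 0 and g_k = O(z^(k+2)) this fixes all
   coefficients.  On the other side r = 1 + z - z^2 - 2 z s_2 and r^2 = Delta
   say exactly that s_2 is a root of 1 - (1 + z - z^2) s + z s^2, and this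
   quadratic equation is what makes z^k s_2^k and z^k (s_2^(k+1) - s_2^k) obey the
   same recursion. *)

From mathcomp Require Import all_boot all_order all_algebra.
From mathcomp Require Import ring zify.
Set Implicit Arguments. Unset Strict Implicit. Unset Printing Implicit Defensive.
Import GRing.Theory Num.Theory.
Local Open Scope ring_scope.

(* [f k n] and [g k n] stand for the number of paths of length n ending at level k
   whose last step is up (or that are empty), resp. down.  The constraints on [g]
   are only imposed up to length m: paths are later enumerated with down-steps
   of size at most m, which is exact only for such lengths. *)
Definition air_recursion (R : nzSemiRingType) (m : nat) (f g : nat -> nat -> R) : Prop :=
  [/\ forall k, f k 0%N = (k == 0%N)%:R,
      forall n, f 0%N n.+1 = 0,
      forall k n, f k.+1 n.+1 = f k n + g k n,
      forall k n, (n < m)%N -> g k n.+1 = f k.+1 n + g k.+1 n.+1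
    & forall k n, (n <= m)%N -> (n <= k.+1)%N -> g k n = 0].

Lemma air_recursion_unique (R : nzSemiRingType) m (f g f' g' : nat -> nat -> R) :
  air_recursion m f g -> air_recursion m f' g' ->
  forall k n, (n <= m)%N -> f k n = f' k n /\ g k n = g' k n.
Proof.
move=> [f_0 f0_ fSS gS g_small] [f'_0 f'0_ f'SS g'S g'_small] k n.
elim: n k => [|n IH] k le_nm; first by rewrite f_0 f'_0 g_small ?g'_small.
have {}IH k' : f k' n = f' k' n /\ g k' n = g' k' n by apply: IH; apply: ltnW.
split; first by case: k => [|k]; rewrite ?f0_ ?f'0_ // fSS f'SS; case: (IH k) => -> ->.
(* Downward induction on k, starting from k >= n where both sides vanish. *)
suff g_eq d k' : (n <= k' + d)%N -> g k' n.+1 = g' k' n.+1 by apply: g_eq (leq_addl k n).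
elim: d k' => [|d IHd] k' le_n_kd.
  by rewrite addn0 in le_n_kd; rewrite (g_small k') ?(g'_small k').
have [le_nk | lt_kn] := leqP n k'.
  by rewrite (g_small k') ?(g'_small k') ?ltnS.
rewrite (gS k') // (g'S k') // IHd; last by rewrite addSnnS.
by case: (IH k'.+1) => ->.
Qed.

(** * Paths as words over a finite alphabet *)

Definition ends_up (s : seq int) : bool := (s == [::]) || is_up (last 0 s).

Lemma height_rcons s x i : (i <= size s)%N -> height (rcons s x) i = height s i.
Proof.
move=> le_is; apply: eq_big_nat => j /andP[_ lt_ji].
by rewrite nth_rcons (leq_trans lt_ji le_is).
Qed.

Lemma end_level_rcons s x : end_level (rcons s x) = end_level s + x.
Proof.
rewrite /end_level size_rcons /height big_nat_recr //= nth_rcons ltnn eqxx.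
by rewrite -/(height _ _) height_rcons.
Qed.

Lemma end_level_nil : end_level [::] = 0.
Proof. by rewrite /end_level /height big_geq. Qed.

Lemma iotaSr m n : iota m n.+1 = rcons (iota m n) (m + n).
Proof. by rewrite -addn1 iotaD cats1. Qed.

Lemma air_path_rcons s x : air_path (rcons s x) =
  [&& air_path s, is_up x || is_down x, 0 <= end_level s + x &
      ~~ (is_down (last 0 s) && is_down x)].
Proof.
have heights : all (fun i => 0 <= height (rcons s x) i) (iota 0 (size s).+1) =
               all (fun i => 0 <= height s i) (iota 0 (size s).+1).
  by apply: (@eq_in_all nat) => i; rewrite mem_iota ltnS => /height_rcons ->.
have pairs : all (fun i => ~~ (is_down (rcons s x)`_i && is_down (rcons s x)`_i.+1))
                 (iota 0 (size s)) =
             all (fun i => ~~ (is_down s`_i && is_down s`_i.+1)) (iota 0 (size s).-1)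
             && ~~ (is_down (last 0 s) && is_down x).
  case/lastP: s {heights} => [|s y]; first by [].
  rewrite size_rcons iotaSr all_rcons /= !nth_rcons size_rcons ltnn ltnSn eqxx.
  rewrite last_rcons [LHS]andbC; congr (_ && _); last by rewrite ltnn eqxx.
  apply: (@eq_in_all nat) => i.
  rewrite mem_iota add0n => /andP[_ lt_is].
  by rewrite !nth_rcons size_rcons ltnS lt_is (ltnW lt_is) ltnS lt_is.
rewrite /air_path all_rcons size_rcons succnK pairs iotaSr all_rcons heights.
rewrite -end_level_rcons /end_level size_rcons.
by case: (_ || _); case: (0 <= _); rewrite /= ?andbF // !andbA.
Qed.

Lemma air_path_nil : air_path [::].
Proof. by rewrite /air_path /= /height big_geq. Qed.

Lemma air_path_end_level_ge0 s : air_path s -> 0 <= end_level s.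
Proof. by case/and3P=> _ /allP-> //; rewrite mem_iota leqnn. Qed.

Lemma ends_up_rcons s x : ends_up (rcons s x) = is_up x.
Proof. by rewrite /ends_up last_rcons; case: s. Qed.

Lemma air_path_ends_up s : air_path s -> ends_up s = ~~ is_down (last 0 s).
Proof.
case/and3P=> /allP steps_ok _ _; case/lastP: s steps_ok => [|s x] // steps_ok.
rewrite ends_up_rcons last_rcons.
have /steps_ok : x \in rcons s x by rewrite mem_rcons mem_head.
case/orP=> [/eqP-> // | x_down]; rewrite x_down; apply/negbTE/eqP.
by move: x_down; rewrite /is_down; lia.
Qed.

Definition steps (m : nat) : seq int := [seq dec_step i | i <- iota 0 m.+1].

Fixpoint words (m n : nat) : seq (seq int) :=
  if n is n'.+1 then [seq rcons s x | s <- words m n', x <- steps m] else [:: [::]].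

Lemma dec_step_inj : injective dec_step.
Proof.
by move=> i j; rewrite /dec_step; case: eqP => [->|]; case: eqP => [->|] //; lia.
Qed.

Lemma mem_steps m x : (x \in steps m) = (x == 1) || (- m%:Z <= x <= -1).
Proof.
apply/mapP/idP => [[i] | /orP[/eqP-> | x_range]]; last first.
- exists `|x|%N; first by rewrite mem_iota; lia.
  by rewrite /dec_step; case: (`|x|%N =P 0%N); lia.
- by exists 0%N.
rewrite mem_iota /dec_step => /andP[_ i_le] ->.
by case: i i_le => //= i i_le; lia.
Qed.

Lemma uniq_steps m : uniq (steps m).
Proof. by rewrite (map_inj_uniq dec_step_inj) iota_uniq. Qed.

Lemma size_words m n : size (words m n) = (m.+1 ^ n)%N.
Proof. by elim: n => [|n IH] //; rewrite size_allpairs IH size_map size_iota expnSr. Qed.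

Lemma uniq_words m n : uniq (words m n).
Proof.
elim: n => [|n IH] //; apply: allpairs_uniq => //; first exact: uniq_steps.
by move=> [s x] [s' x'] _ _ /= /rcons_inj [-> ->].
Qed.

Lemma mem_words m n s : (s \in words m n) = (size s == n) && all (mem (steps m)) s.
Proof.
elim: n s => [|n IH] s; first by case: s.
apply/allpairsP/idP => [[[s' x] /= [s'_in x_in ->]] | ].
  by move: s'_in; rewrite IH size_rcons all_rcons eqSS => /andP[-> ->]; rewrite andbT.
case/lastP: s => [|s x] //; rewrite size_rcons all_rcons eqSS.
move=> /andP[size_s /andP[x_in s_in]].
by exists (s, x); rewrite IH size_s.
Qed.

Lemma end_level_words m n s : s \in words m n -> end_level s <= n%:Z.
Proof.
elim: n s => [|n IH] s; first by rewrite inE => /eqP->; rewrite end_level_nil.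
case/allpairsP => [[s' x] /= [/IH s'_le x_in ->]].
by rewrite end_level_rcons; move: x_in; rewrite mem_steps; lia.
Qed.

Lemma dec_path_inj n : injective (@dec_path n).
Proof.
move=> t1 t2 /(inj_map _) eq_t; apply/val_inj/eq_t => i j /dec_step_inj.
exact: val_inj.
Qed.

Lemma perm_dec_path_words n :
  perm_eq [seq dec_path t | t : n.-tuple 'I_n.+1] (words n n).
Proof.
have uniq_dec : uniq [seq dec_path t | t : n.-tuple 'I_n.+1].
  by rewrite (map_inj_uniq (@dec_path_inj n)) enum_uniq.
have sub_dec : {subset [seq dec_path t | t : n.-tuple 'I_n.+1] <= words n n}.
  move=> _ /mapP[t _ ->]; rewrite mem_words size_map size_tuple eqxx.
  by apply/allP=> _ /mapP[i _ ->]; apply: map_f; rewrite mem_iota ltn_ord.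
have [|_ eq_dec] := uniq_min_size uniq_dec sub_dec.
  by rewrite size_words size_map -cardT card_tuple card_ord.
by apply: uniq_perm => //; apply: uniq_words.
Qed.

Lemma count_paths_words P n :
  count_paths P n = count (fun s => air_path s && P s) (words n n).
Proof.
rewrite -(permP (perm_dec_path_words n)) count_map /count_paths cardsE cardE.
by rewrite enumT /enum_mem size_filter.
Qed.

(** * The recursion for path counts *)

Definition npaths (m n : nat) (P : pred (seq int)) : nat :=
  count (fun s => air_path s && P s) (words m n).

Lemma npathsS m n P : npaths m n.+1 P =
  sumn [seq count (fun x => air_path (rcons s x) && P (rcons s x)) (steps m)
       | s <- words m n].
Proof.
rewrite /npaths /= count_flatten -map_comp; congr sumn.
by apply: eq_map => s /=; rewrite count_map.
Qed.

Lemma eq_npaths m n P Q :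
  (forall s, s \in words m n -> air_path s -> P s = Q s) -> npaths m n P = npaths m n Q.
Proof.
move=> eqPQ; apply: eq_in_count => s s_in /=.
by case: (boolP (air_path s)) => // /(eqPQ s s_in)->.
Qed.

Lemma npaths_split m n P Q :
  npaths m n P = (npaths m n (predI P Q) + npaths m n (predI P (predC Q)))%N.
Proof.
rewrite /npaths; elim: (words m n) => //= s L ->; rewrite addnACA.
by case: (air_path s) (P s) (Q s) => [] [] [].
Qed.

Lemma count_steps_end_level m s (k : int) (p : pred int) :
  count (fun x => (end_level (rcons s x) == k) && p x) (steps m) =
  (k - end_level s \in steps m) && p (k - end_level s).
Proof.
set y := k - end_level s.
rewrite (eq_count (a2 := fun x => p y && (x == y))) => [|x]; last first.
  rewrite end_level_rcons; have [-> | ne_xy] := eqVneq x y.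
    by rewrite /y addrC subrK eqxx andbT.
  by rewrite andbF; case: eqP => //= eq_k; move: ne_xy; rewrite /y -eq_k addrC addKr eqxx.
case: (p y); rewrite ?andbT ?andbF; last exact: count_pred0.
exact: count_uniq_mem (uniq_steps m).
Qed.

Lemma count_up_extensions m s k :
  count (fun x => air_path (rcons s x) &&
                  ((end_level (rcons s x) == k%:Z) && ends_up (rcons s x))) (steps m) =
  air_path s && (end_level s + 1 == k%:Z).
Proof.
rewrite (eq_count (a2 := fun x => (end_level (rcons s x) == k%:Z) &&
                                  (air_path (rcons s x) && is_up x))); last first.
  by move=> x; rewrite ends_up_rcons andbCA.
rewrite count_steps_end_level air_path_rcons mem_steps.
have [air_s | _] := boolP (air_path s); last by rewrite andbF.
by have := air_path_end_level_ge0 air_s; rewrite /is_up /is_down /=; lia.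
Qed.

Lemma count_down_extensions m s k : end_level s <= m%:Z ->
  count (fun x => air_path (rcons s x) &&
                  ((end_level (rcons s x) == k%:Z) && ~~ ends_up (rcons s x))) (steps m) =
  [&& air_path s, ends_up s & k%:Z < end_level s].
Proof.
move=> le_sm.
rewrite (eq_count (a2 := fun x => (end_level (rcons s x) == k%:Z) &&
                                  (air_path (rcons s x) && ~~ is_up x))); last first.
  by move=> x; rewrite ends_up_rcons andbCA.
rewrite count_steps_end_level air_path_rcons mem_steps.
have [air_s | _] := boolP (air_path s); last by rewrite andbF.
rewrite (air_path_ends_up air_s); have := air_path_end_level_ge0 air_s.
by rewrite /is_up /is_down /=; lia.
Qed.

Lemma npaths_pred0 m n : npaths m n pred0 = 0%N.
Proof.
by rewrite /npaths (eq_count (a2 := pred0)) ?count_pred0 // => s; rewrite andbF.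
Qed.

Definition fpaths (m k n : nat) : nat :=
  npaths m n (fun s => (end_level s == k%:Z) && ends_up s).
Definition gpaths (m k n : nat) : nat :=
  npaths m n (fun s => (end_level s == k%:Z) && ~~ ends_up s).

Lemma fpathsS m k n : fpaths m k n.+1 = npaths m n (fun s => end_level s + 1 == k%:Z).
Proof.
rewrite /fpaths npathsS /npaths -sumn_count; congr sumn.
by apply: eq_map => s; apply: count_up_extensions.
Qed.

Lemma gpathsS m k n : (n <= m)%N ->
  gpaths m k n.+1 = npaths m n (fun s => ends_up s && (k%:Z < end_level s)).
Proof.
move=> le_nm; rewrite /gpaths npathsS /npaths -sumn_count; congr sumn.
apply/eq_in_map => s /end_level_words le_sn; apply: count_down_extensions; lia.
Qed.

Lemma fpaths0 m k : fpaths m k 0 = (k == 0)%N.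
Proof. by rewrite /fpaths /npaths /= air_path_nil end_level_nil; case: k. Qed.

Lemma gpaths0 m k : gpaths m k 0 = 0%N.
Proof. by rewrite /gpaths /npaths /= !andbF. Qed.

Lemma fpaths0S m n : fpaths m 0 n.+1 = 0%N.
Proof.
rewrite fpathsS -[RHS](npaths_pred0 m n).
by apply: eq_npaths => s _ /air_path_end_level_ge0 /=; lia.
Qed.

Lemma fpathsSS m k n : fpaths m k.+1 n.+1 = (fpaths m k n + gpaths m k n)%N.
Proof.
have shift s : (end_level s + 1 == k.+1%:Z) = (end_level s == k%:Z).
  by rewrite -addn1 PoszD (inj_eq (addIr _)).
rewrite fpathsS (npaths_split _ _ _ ends_up).
by congr addn; apply: eq_npaths => s _ _ /=; rewrite shift.
Qed.

Lemma gpathsSS m k n : (n < m)%N ->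
  gpaths m k n.+1 = (fpaths m k.+1 n + gpaths m k.+1 n.+1)%N.
Proof.
move=> /ltnW le_nm.
rewrite !gpathsS // (npaths_split _ _ _ (fun s => end_level s == k.+1%:Z)).
congr addn; apply: eq_npaths => s _ _ /=; case: (ends_up s); rewrite ?andbF ?andbT //=.
all: by move: (end_level s) => e; apply/idP/idP; lia.
Qed.

Lemma gpaths_small m k n : (n <= m)%N -> (n <= k)%N -> gpaths m k n.+1 = 0%N.
Proof.
move=> le_nm le_nk; rewrite gpathsS // -[RHS](npaths_pred0 m n).
apply: eq_npaths => s /end_level_words + _ /=; move: (end_level s) => e le_en.
by rewrite andbC; apply/negbTE; lia.
Qed.

Lemma paths_recursion m :
  air_recursion m (fun k n => (fpaths m k n)%:R : rat) (fun k n => (gpaths m k n)%:R).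
Proof.
split=> [k | n | k n | k n lt_nm | k [|n] le_nm le_nk].
- by rewrite fpaths0.
- by rewrite fpaths0S.
- by rewrite fpathsSS natrD.
- by rewrite gpathsSS // natrD.
- by rewrite gpaths0.
- by rewrite gpaths_small // ltnW.
Qed.

(** * Truncated power series *)

Section TakePoly.
Variable R : nzSemiRingType.
Implicit Types p q : {poly R}.

Lemma take_polyMr N p q : take_poly N (p * take_poly N q) = take_poly N (p * q).
Proof.
by rewrite -{2}(poly_take_drop N q) mulrDr take_polyD mulrA take_polyMXn_0 addr0.
Qed.

Lemma take_polyMl N p q : take_poly N (take_poly N p * q) = take_poly N (p * q).
Proof.
rewrite -{2}(poly_take_drop N p) mulrDl take_polyD -mulrA -commr_polyXn mulrA.
by rewrite take_polyMXn_0 addr0.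
Qed.

End TakePoly.

Definition ps_trunc (N : nat) (a : ps) : {poly rat} := \poly_(i < N) a i.

Lemma coef_ps_trunc N a n : (n < N)%N -> (ps_trunc N a)`_n = a n.
Proof. by move=> lt_nN; rewrite coef_poly lt_nN. Qed.

Lemma ps_trunc_poly N p : ps_trunc N (ps_of_poly p) = take_poly N p.
Proof. by []. Qed.

Lemma ps_trunc_zpow N k : ps_trunc N (ps_zpow k) = take_poly N 'X^k.
Proof. by apply/polyP=> i; rewrite coef_poly coef_take_poly coefXn. Qed.

Lemma ps_trunc_sub N a b : ps_trunc N (ps_sub a b) = ps_trunc N a - ps_trunc N b.
Proof. by apply/polyP=> i; rewrite coefB !coef_poly; case: ifP; rewrite ?subr0. Qed.

Lemma ps_trunc_mul N a b :
  ps_trunc N (ps_mul a b) = take_poly N (ps_trunc N a * ps_trunc N b).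
Proof.
apply/polyP=> i; rewrite coef_poly coef_take_poly coefM.
case: ltnP => // lt_iN; apply: eq_bigr => j _.
by rewrite !coef_poly (leq_ltn_trans (leq_ord j) lt_iN) (leq_ltn_trans (leq_subr j i)).
Qed.

Lemma ps_trunc_exp N a k : ps_trunc N (ps_exp a k) = take_poly N (ps_trunc N a ^+ k).
Proof.
elim: k => [|k IH].
  by apply/polyP=> i; rewrite coef_poly coef_take_poly coef1; case: ltnP.
by rewrite exprS -take_polyMr -IH -ps_trunc_mul.
Qed.

Definition f_series (s : ps) (k : nat) : ps := ps_mul (ps_zpow k) (ps_exp s k).
Definition g_series (s : ps) (k : nat) : ps :=
  ps_mul (ps_zpow k) (ps_sub (ps_exp s k.+1) (ps_exp s k)).

Definition f_poly (S : {poly rat}) (k : nat) : {poly rat} := 'X^k * S ^+ k.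
Definition g_poly (S : {poly rat}) (k : nat) : {poly rat} := 'X^k * (S ^+ k.+1 - S ^+ k).

Lemma coef_f_series N s k n :
  (n < N)%N -> f_series s k n = (f_poly (ps_trunc N s) k)`_n.
Proof.
move=> lt_nN; rewrite -(coef_ps_trunc _ lt_nN) ps_trunc_mul ps_trunc_zpow ps_trunc_exp.
by rewrite take_polyMl take_polyMr coef_take_poly lt_nN.
Qed.

Lemma coef_g_series N s k n :
  (n < N)%N -> g_series s k n = (g_poly (ps_trunc N s) k)`_n.
Proof.
move=> lt_nN; rewrite -(coef_ps_trunc _ lt_nN) ps_trunc_mul ps_trunc_zpow ps_trunc_sub.
by rewrite !ps_trunc_exp -linearB take_polyMl take_polyMr coef_take_poly lt_nN.
Qed.

Definition air_quadratic (S : {poly rat}) : {poly rat} :=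
  1 - numer_poly * S + 'X * S ^+ 2.

Section QuadraticRecursion.
Variables (N : nat) (S : {poly rat}).
Hypothesis quadS : take_poly N (air_quadratic S) = 0.

Lemma coef_f_poly0 n : (f_poly S 0)`_n = (n == 0%N)%:R.
Proof. by rewrite /f_poly !expr0 mulr1 coef1. Qed.

Lemma coef_f_polyS0 k : (f_poly S k.+1)`_0 = 0.
Proof. by rewrite /f_poly coefXnM. Qed.

Lemma coef_f_polySS k n : (f_poly S k.+1)`_n.+1 = (f_poly S k)`_n + (g_poly S k)`_n.
Proof.
have -> : f_poly S k.+1 = 'X * (f_poly S k + g_poly S k).
  by rewrite /f_poly /g_poly !exprS; ring.
by rewrite coefXM coefD.
Qed.

Lemma coef_mul_quadratic p n : (n < N)%N -> (p * air_quadratic S)`_n = 0.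
Proof.
move=> lt_nN; have := coef_take_poly N (p * air_quadratic S) n.
by rewrite lt_nN -take_polyMr quadS mulr0 take_poly0r coef0.
Qed.

Lemma coef_g_polyS k n : (n.+1 < N)%N ->
  (g_poly S k)`_n.+1 = (f_poly S k.+1)`_n + (g_poly S k.+1)`_n.+1.
Proof.
move=> lt_nN.
have -> : g_poly S k = 'X * f_poly S k.+1 + g_poly S k.+1 - f_poly S k * air_quadratic S.
  by rewrite /f_poly /g_poly /air_quadratic /numer_poly !exprS; ring.
by rewrite coefB coefD coefXM coef_mul_quadratic // subr0.
Qed.

Lemma coef_g_poly_small k n : (n < N)%N -> (n <= k.+1)%N -> (g_poly S k)`_n = 0.
Proof.
move=> lt_nN le_nk.
(* (1 - S) (1 - X S) = air_quadratic S - X^2 S, and 1 + X S inverts 1 - X S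
   modulo X^2: so S - 1 is divisible by X^2 up to a multiple of air_quadratic S. *)
have -> : g_poly S k = 'X^(k.+2) * (S ^+ k * (S * (1 + 'X * S) - S ^+ 2 * (1 - S)))
                       - ('X^k * S ^+ k * (1 + 'X * S)) * air_quadratic S.
  by rewrite /g_poly /air_quadratic /numer_poly !exprS; ring.
by rewrite coefB coefXnM ltnS le_nk coef_mul_quadratic // subr0.
Qed.

End QuadraticRecursion.

Lemma s2_quadratic r : r 0%N = 1 -> ps_mul r r = ps_of_poly Delta ->
  forall N, take_poly N (air_quadratic (ps_trunc N.+1 (s2_of r))) = 0.
Proof.
move=> r0 r_sq N; set S := ps_trunc N.+1 (s2_of r).
have r_root : ps_trunc N.+1 r = take_poly N.+1 (numer_poly - 'X * S *+ 2).
  apply/polyP=> -[|i]; rewrite coef_poly coef_take_poly; case: ltnP => // lt_iN.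
    by rewrite coefB coefMn coefXM mul0rn subr0 r0 /numer_poly !coefE.
  rewrite coefB coefMn coefXM coef_poly ltnW //= /s2_of /ps_scale /ps_divz /ps_sub.
  by rewrite /ps_of_poly -mulr_natr; field.
have quad4 : take_poly N.+1 (air_quadratic S * 'X *+ 4) = 0.
  have -> : air_quadratic S * 'X *+ 4 =
            (numer_poly - 'X * S *+ 2) ^+ 2 - Delta.
    by rewrite /air_quadratic /Delta /numer_poly !scaler_nat; ring.
  rewrite linearB /= -(ps_trunc_poly _ Delta) -r_sq ps_trunc_mul r_root.
  by rewrite take_polyMl take_polyMr subrr.
apply/polyP=> i; rewrite coef_take_poly coef0; case: ltnP => // lt_iN.
have := congr1 (fun p : {poly rat} => p`_i.+1) quad4.
rewrite /= coef_take_poly ltnS lt_iN coefMn coefMX coef0 => /eqP.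
by rewrite mulrn_eq0 => /eqP.
Qed.

Lemma series_recursion s :
  (forall N, take_poly N (air_quadratic (ps_trunc N.+1 s)) = 0) ->
  forall m, air_recursion m (f_series s) (g_series s).
Proof.
move=> quad m; split=> [k | n | k n | k n _ | k n _ le_nk].
- by rewrite (coef_f_series (N := 1)) //; case: k => [|k];
    rewrite ?coef_f_poly0 ?coef_f_polyS0.
- by rewrite (coef_f_series (N := n.+2)) ?coef_f_poly0.
- rewrite !(coef_f_series (N := n.+2)) ?(coef_g_series (N := n.+2)); try lia.
  exact: coef_f_polySS.
- rewrite !(coef_f_series (N := n.+3)) ?(coef_g_series (N := n.+3)); try lia.
  by rewrite (coef_g_polyS (quad n.+2)).
- by rewrite (coef_g_series (N := n.+2)) ?(coef_g_poly_small (quad n.+1)) // ltnW.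
Qed.

Lemma f_gf_fpaths k n : f_gf k n = (fpaths n k n)%:R.
Proof. by rewrite /f_gf count_paths_words. Qed.

Lemma g_gf_gpaths k n : g_gf k n = (gpaths n k n)%:R.
Proof.
rewrite /g_gf count_paths_words; congr _%:R; apply: eq_npaths => s _ /air_path_ends_up->.
by rewrite negbK -andbA; case: s.
Qed.

Lemma all_gf_split k n : all_gf k n = f_gf k n + g_gf k n.
Proof.
rewrite f_gf_fpaths g_gf_gpaths -natrD /all_gf count_paths_words.
by rewrite -[count _ _]/(npaths n n _) (npaths_split _ _ _ ends_up).
Qed.

Lemma f_series_add_g s k n :
  f_series s k n + g_series s k n = ps_mul (ps_zpow k) (ps_exp s k.+1) n.
Proof.
rewrite /f_series /g_series /ps_mul -big_split; apply: eq_bigr => i _ /=.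
by rewrite /ps_sub -mulrDr addrC subrK.
Qed.

Theorem theorem1 (r : ps) (hr0 : r 0%N = 1) (hr2 : ps_mul r r = ps_of_poly Delta) :
  forall (k n : nat),
    [/\ f_gf k n = ps_mul (ps_zpow k) (ps_exp (s2_of r) k) n,
        g_gf k n = ps_mul (ps_zpow k)
                     (ps_sub (ps_exp (s2_of r) k.+1) (ps_exp (s2_of r) k)) n,
        f_gf k n + g_gf k n = ps_mul (ps_zpow k) (ps_exp (s2_of r) k.+1) n
      & all_gf k n = ps_mul (ps_zpow k) (ps_exp (s2_of r) k.+1) n].
Proof.
move=> k n.
have [f_eq g_eq] := air_recursion_unique (paths_recursion n)
  (series_recursion (s2_quadratic hr0 hr2) n) k (leqnn n).
have f_k : f_gf k n = f_series (s2_of r) k n by rewrite f_gf_fpaths f_eq.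
have g_k : g_gf k n = g_series (s2_of r) k n by rewrite g_gf_gpaths g_eq.
by split; rewrite ?all_gf_split ?f_k ?g_k ?f_series_add_g.
Qed.
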